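(* Let $(X_n)_{n\ge0}$ be a Markov chain on $\mathbb Z_+$. Assume there exist $\varepsilon>0$ and $M<\infty$ such that $\mathbb E_i\{X_1-i;\,X_1-i\le M\}\ge\varepsilon$ for all $i\in\mathbb Z_+$, and that there exists a random variable $\zeta\ge0$ with $\mathbb E\zeta<\infty$ such that $\mathbb P_i\{X_1-i\le -j\}\le\mathbb P\{\zeta\ge j\}$ for all $i,j\in\mathbb Z_+$. Then there exists $\gamma>0$ such that $\sup_{i\in\mathbb Z_+}\mathbb E_ie^{\gamma\ell(i)}<\infty$.
   Context: $\mathbb P_i,\mathbb E_i$ denote probability and expectation given $X_0=i$; $\mathbb E_i\{Y;A\}:=\mathbb E_i[Y\mathbf 1_A]$; the local time at $i$ is $\ell(i):=\sum_{n=0}^\infty\mathbf 1\{X_n=i\}$. *)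

From Stdlib Require Import Reals Lra Lia Arith.
Open Scope R_scope.

(** A Markov chain on Z_+ = nat is given by its transition matrix
    [P i j = P_i{X_1 = j}]. *)
Definition stochastic (P : nat -> nat -> R) : Prop :=
  forall i, (forall j, 0 <= P i j) /\ infinite_sum (P i) 1.

Definition pmf (p : nat -> R) : Prop :=
  (forall k, 0 <= p k) /\ infinite_sum p 1.

Definition indic (b : bool) : R := if b then 1 else 0.

(** Truncated exponential moment of the local time at [i]:
    [trunc_exp P gamma i B n x]
      = E_x[ exp(gamma * #{0 <= k <= n : X_k = i}) ; X_1,...,X_n <= B ]. *)
Fixpoint trunc_exp (P : nat -> nat -> R) (gamma : R) (i B n x : nat) : R :=
  match n with
  | O => exp (gamma * indic (Nat.eqb x i))
  | S m => exp (gamma * indic (Nat.eqb x i)) *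
           sum_f_R0 (fun y => P x y * trunc_exp P gamma i B m y) B
  end.

(** [E_i e^{gamma l(i)}] with [l(i) = sum_{n>=0} 1{X_n = i}] is, by monotone
    convergence, the supremum over n and B of [trunc_exp P gamma i B n i]
    (the integrand is nonnegative and the truncations increase to it).
    [exp_loc_le P gamma i C] expresses [E_i e^{gamma l(i)} <= C]. *)
Definition exp_loc_le (P : nat -> nat -> R) (gamma : R) (i : nat) (C : R) : Prop :=
  forall n B, trunc_exp P gamma i B n i <= C.

From Stdlib Require Import Reals Lra Lia Arith Psatz.
Open Scope R_scope.

(* For [s] positive, nonincreasing and summable, the function
   [f y = 1 + Sb - sum_{j < y - i} s j] takes values in [[1, 1 + Sb]]; we show [E_x f(X_1) <= f x]
   for [x <> i] and [E_i f(X_1) <= f i - delta] with [delta = s L * eps / M > 0]. With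
   [e^gamma = f i / (f i - delta)] the process [e^{gamma l_n(i)} f(X_n)] is then a supermartingale,
   whence [E_i e^{gamma l(i)} <= f i = 1 + Sb] uniformly in [i].

   Above [i], at height [k], the drift gains at least [eps s (k + L)] while downward jumps, whose
   tails are dominated by [z j = P{zeta >= j}], cost at most
   [sum_j (s (k - j) - s (k + L)) z j]; so [s] must decay slowly relative to [z]. We take
   [s k = w (k + N)] with [w b = (A + sum_{m <= b} m z'_m) / (b (b + 1))], [z'] being [z] flattened
   below a level [J]: [w] is nonincreasing with [sum w <= A + sum z' < oo] (this is where
   [E zeta < oo] enters), [w a / w b] is close to [1] when [b - a] is small compared with [a] and
   bounded when [b <= 2 a], and [z' c <= C w b] when [b] is a bounded multiple of [c]. *)

(* [psum f n] has the [n] terms [f 0 .. f (n - 1)], whereas [sum_f_R0 f n] has [n + 1]. *)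
Fixpoint psum (f : nat -> R) (n : nat) : R :=
  match n with O => 0 | S n => psum f n + f n end.

Lemma psum_S f n : psum f (S n) = psum f n + f n.
Proof. reflexivity. Qed.

Lemma sum_f_R0_psum f n : sum_f_R0 f n = psum f (S n).
Proof. induction n as [|n IH]; simpl; [lra|]. rewrite IH; simpl; lra. Qed.

Lemma psum_le f g n : (forall j, (j < n)%nat -> f j <= g j) -> psum f n <= psum g n.
Proof.
  induction n as [|n IH]; intros H; simpl; [lra|].
  assert (psum f n <= psum g n) by (apply IH; intros; apply H; lia).
  assert (f n <= g n) by (apply H; lia). lra.
Qed.

Lemma psum_ext f g n : (forall j, (j < n)%nat -> f j = g j) -> psum f n = psum g n.
Proof.
  induction n as [|n IH]; intros H; simpl; [lra|].
  rewrite IH by (intros; apply H; lia). rewrite H by lia. lra.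
Qed.

Lemma psum_const c n : psum (fun _ => c) n = INR n * c.
Proof. induction n as [|n IH]; simpl psum; [simpl; lra|]. rewrite IH, S_INR. lra. Qed.

Lemma psum_nonneg f n : (forall j, (j < n)%nat -> 0 <= f j) -> 0 <= psum f n.
Proof.
  intros H. apply Rle_trans with (psum (fun _ => 0) n); [|apply psum_le; auto].
  rewrite psum_const. lra.
Qed.

Lemma psum_plus f g n : psum (fun j => f j + g j) n = psum f n + psum g n.
Proof. induction n; simpl; lra. Qed.

Lemma psum_scal c f n : psum (fun j => c * f j) n = c * psum f n.
Proof. induction n as [|n IH]; simpl; [lra|]. rewrite IH. lra. Qed.

Lemma psum_shift f n : psum f (S n) = f 0%nat + psum (fun j => f (S j)) n.
Proof. induction n as [|n IH]; simpl in *; [lra|]. rewrite IH. lra. Qed.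

Lemma psum_add f a b : psum f (a + b) = psum f a + psum (fun j => f (a + j)%nat) b.
Proof.
  induction b as [|b IH]; simpl; [rewrite Nat.add_0_r; lra|].
  rewrite Nat.add_succ_r. simpl. rewrite IH. lra.
Qed.

Lemma psum_mono f n m : (forall j, 0 <= f j) -> (n <= m)%nat -> psum f n <= psum f m.
Proof.
  intros H Hnm. replace m with (n + (m - n))%nat by lia. rewrite psum_add.
  assert (0 <= psum (fun j => f (n + j)%nat) (m - n)) by (apply psum_nonneg; auto). lra.
Qed.

Lemma psum_rev f n : psum (fun j => f (n - 1 - j)%nat) n = psum f n.
Proof.
  induction n as [|n IH]; [reflexivity|].
  rewrite psum_shift, psum_S, <- IH. replace (S n - 1 - 0)%nat with n by lia.
  rewrite (psum_ext (fun j => f (S n - 1 - S j)%nat) (fun j => f (n - 1 - j)%nat)) by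
    (intros; f_equal; lia).
  lra.
Qed.

Lemma psum_swap (g : nat -> nat -> R) n m :
  psum (fun y => psum (fun j => g y j) n) m = psum (fun j => psum (fun y => g y j) m) n.
Proof.
  induction m as [|m IH]; simpl.
  - induction n as [|n IHn]; simpl; [lra|]. rewrite <- IHn. lra.
  - rewrite IH, <- psum_plus. reflexivity.
Qed.

Lemma psum_truncate f m n :
  (m <= n)%nat -> psum f m = psum (fun j => if (j <? m)%nat then f j else 0) n.
Proof.
  intros H. replace n with (m + (n - m))%nat by lia. rewrite psum_add.
  rewrite (psum_ext (fun j => if (j <? m)%nat then f j else 0) f) by
    (intros j Hj; destruct (Nat.ltb_spec j m); [auto|lia]).
  rewrite (psum_ext (fun j => if (m + j <? m)%nat then f (m + j)%nat else 0) (fun _ => 0)) by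
    (intros j _; destruct (Nat.ltb_spec (m + j) m); [lia|auto]).
  rewrite psum_const. lra.
Qed.

Lemma Un_cv_const c : Un_cv (fun _ => c) c.
Proof. intros e He. exists 0%nat. intros. unfold Rdist. rewrite Rminus_diag, Rabs_R0. lra. Qed.

Lemma Un_cv_ge_eventually a (V : nat -> R) l B :
  (forall n, (n >= B)%nat -> a <= V n) -> Un_cv V l -> a <= l.
Proof.
  intros H Hc. destruct (Rle_or_lt a l) as [h|h]; auto.
  destruct (Hc (a - l)) as [N HN]; [lra|].
  specialize (HN (Nat.max N B) ltac:(lia)). specialize (H (Nat.max N B) ltac:(lia)).
  unfold Rdist in HN. apply Rabs_def2 in HN. lra.
Qed.

Lemma infinite_sum_comb f g a b la lb :
  infinite_sum f la -> infinite_sum g lb ->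
  infinite_sum (fun j => a * f j - b * g j) (a * la - b * lb).
Proof.
  intros hf hg.
  apply (Un_cv_ext (fun n => a * sum_f_R0 f n - b * sum_f_R0 g n)).
  { intros n. induction n as [|n IH]; simpl; [|rewrite <- IH]; ring. }
  apply CV_minus; apply CV_mult; auto; apply Un_cv_const.
Qed.

Lemma sum_f_R0_le_limit (F G : nat -> R) l Q B :
  (forall y, 0 <= F y) -> (forall B', sum_f_R0 F B' <= sum_f_R0 G B' + Q) ->
  infinite_sum G l -> sum_f_R0 F B <= l + Q.
Proof.
  intros HF H HG. apply (Un_cv_ge_eventually _ (fun n => sum_f_R0 G n + Q) _ B).
  - intros n Hn. eapply Rle_trans; [|apply H]. rewrite !sum_f_R0_psum. apply psum_mono; auto; lia.
  - apply CV_plus; auto. apply Un_cv_const.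
Qed.
Lemma nonincreasing_le (z : nat -> R) :
  (forall j, z (S j) <= z j) -> forall a b, (a <= b)%nat -> z b <= z a.
Proof. intros H a b Hab. induction Hab as [|b Hab IH]; [lra|]. specialize (H b). lra. Qed.

(* [tail pz j] is [P{zeta >= j}] when [pz] is the law of [zeta]. *)
Definition tail (pz : nat -> R) (j : nat) : R := 1 - psum pz j.

Section Tail.
Variable pz : nat -> R.
Hypothesis hpz : pmf pz.

Lemma psum_pmf_le1 j : psum pz j <= 1.
Proof.
  destruct hpz as [Hpos Hsum].
  apply Rle_trans with (psum pz (S j)); [apply psum_mono; auto|].
  rewrite <- sum_f_R0_psum. apply sum_incr; auto.
Qed.

Lemma tail_series j : infinite_sum (fun k => pz (k + j)%nat) (tail pz j).
Proof.
  intros e He. destruct (proj2 hpz e He) as [N HN]. exists N. intros n Hn.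
  specialize (HN (j + n)%nat ltac:(lia)). unfold Rdist, tail in *. rewrite sum_f_R0_psum in *.
  rewrite (psum_ext _ (fun k => pz (j + k)%nat)) by (intros; f_equal; lia).
  replace (S (j + n)) with (j + S n)%nat in HN by lia. rewrite psum_add in HN.
  replace (psum (fun k => pz (j + k)%nat) (S n) - (1 - psum pz j)) with
    (psum pz j + psum (fun k => pz (j + k)%nat) (S n) - 1) by ring.
  exact HN.
Qed.

Lemma tail_nonneg j : 0 <= tail pz j.
Proof. unfold tail. pose proof (psum_pmf_le1 j). lra. Qed.

Lemma tail_S_le j : tail pz (S j) <= tail pz j.
Proof. unfold tail. rewrite psum_S. pose proof (proj1 hpz j). lra. Qed.

Lemma tail_cv0 : Un_cv (tail pz) 0.
Proof.
  intros e He. destruct (proj2 hpz e He) as [N HN]. exists (S N). intros n Hn.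
  destruct n as [|n]; [lia|]. specialize (HN n ltac:(lia)). unfold Rdist, tail in *.
  rewrite sum_f_R0_psum in HN. rewrite Rminus_0_r, <- Rabs_Ropp.
  replace (- (1 - psum pz (S n))) with (psum pz (S n) - 1) by ring. exact HN.
Qed.

Lemma psum_tail_S K :
  psum (fun j => tail pz (S j)) K = psum (fun k => INR k * pz k) K + INR K * tail pz K.
Proof.
  induction K as [|K IH]; [unfold tail; simpl; lra|].
  rewrite !psum_S, IH. unfold tail. rewrite psum_S, S_INR. ring.
Qed.

Variable m : R.
Hypothesis hm : infinite_sum (fun k => INR k * pz k) m.

Lemma psum_tail_S_le_mean K : psum (fun j => tail pz (S j)) K <= m.
Proof.
  assert (Hnn : forall k, 0 <= INR k * pz k) by
    (intros k; apply Rmult_le_pos; [apply pos_INR|apply (proj1 hpz)]).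
  rewrite psum_tail_S. replace m with (m + INR K * 0) by ring.
  apply (Un_cv_ge_eventually _ (fun L => m + INR K * tail pz L) _ K).
  2: { apply CV_plus; [apply Un_cv_const|]. apply CV_mult; [apply Un_cv_const|apply tail_cv0]. }
  intros L HL.
  assert (H1 : psum (fun k => INR k * pz k) L <= m).
  { apply Rle_trans with (psum (fun k => INR k * pz k) (S L)); [apply psum_mono; auto|].
    rewrite <- sum_f_R0_psum. apply sum_incr; auto. }
  assert (H2 : psum (fun k => INR k * pz k) K + INR K * (psum pz L - psum pz K)
               <= psum (fun k => INR k * pz k) L).
  { replace L with (K + (L - K))%nat by lia. rewrite !psum_add.
    replace (psum pz K + psum (fun j => pz (K + j)%nat) (L - K) - psum pz K)
      with (psum (fun j => pz (K + j)%nat) (L - K)) by ring.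
    rewrite <- psum_scal. apply Rplus_le_compat_l, psum_le. intros j _.
    apply Rmult_le_compat_r; [apply (proj1 hpz)|apply le_INR; lia]. }
  unfold tail. lra.
Qed.
End Tail.

Lemma exists_small_tail (z : nat -> R) mu eta :
  (forall j, 0 <= z j) -> (forall K, psum (fun j => z (S j)) K <= mu) -> 0 < eta ->
  exists J0, (1 <= J0)%nat /\
    forall K, psum (fun m => if (J0 <=? m)%nat then z m else 0) K <= eta.
Proof.
  intros zpos Hmu Heta.
  set (Z := fun K => psum (fun j => z (S j)) K).
  assert (Hg : Un_growing Z) by (intros n; unfold Z; rewrite psum_S; specialize (zpos (S n)); lra).
  assert (Hub : has_ub Z) by (exists mu; intros x [n ->]; apply Hmu).
  destruct (growing_cv Z Hg Hub) as [l Hl].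
  destruct (Hl (eta / 2)) as [N HN]; [lra|].
  assert (HT : forall K, psum (fun j => if (N <=? j)%nat then z (S j) else 0) K
                         <= Z (Nat.max K N) - Z N).
  { induction K as [|K IH]; [simpl; replace (Nat.max 0 N) with N by lia; lra|].
    rewrite psum_S. destruct (Nat.leb_spec N K).
    - replace (Nat.max (S K) N) with (S (Nat.max K N)) by lia.
      replace (Nat.max K N) with K in * by lia. unfold Z in *. rewrite psum_S. lra.
    - replace (Nat.max (S K) N) with (Nat.max K N) by lia. lra. }
  exists (S N). split; [lia|]. intros K.
  apply Rle_trans with (psum (fun m => if (S N <=? m)%nat then z m else 0) (S K)).
  { apply psum_mono; [|lia]. intros j. destruct (S N <=? j)%nat; auto; lra. }
  rewrite psum_shift. simpl (S N <=? 0)%nat.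
  change (psum (fun j => if (S N <=? S j)%nat then z (S j) else 0) K)
    with (psum (fun j => if (N <=? j)%nat then z (S j) else 0) K).
  assert (h1 := HN (Nat.max K N) ltac:(lia)). assert (h2 := HN N ltac:(lia)).
  specialize (HT K). unfold Rdist in *. apply Rabs_def2 in h1. apply Rabs_def2 in h2. lra.
Qed.
Lemma psum_INR_S b : psum (fun m => INR (S m)) b = INR b * INR (S b) / 2.
Proof. induction b as [|b IH]; [simpl; lra|]. rewrite psum_S, IH, !S_INR. lra. Qed.

Definition zflat (z : nat -> R) (J m : nat) : R := z (Nat.max m J).

Definition wnum (z : nat -> R) (J : nat) (A : R) (b : nat) : R :=
  A + psum (fun m => INR (S m) * zflat z J (S m)) b.

Definition weight (z : nat -> R) (J : nat) (A : R) (b : nat) : R :=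
  wnum z J A b / (INR b * INR (S b)).

Section Weight.
Variable z : nat -> R.
Hypothesis zpos : forall j, 0 <= z j.
Hypothesis zdec : forall j, z (S j) <= z j.
Variable J : nat.
Variable A : R.
Hypothesis Apos : 0 < A.

Lemma zflat_nonneg m : 0 <= zflat z J m.
Proof. apply zpos. Qed.

Lemma zflat_le a b : (a <= b)%nat -> zflat z J b <= zflat z J a.
Proof. intros; unfold zflat; apply nonincreasing_le; auto; lia. Qed.

Lemma wnum_term_nonneg m : 0 <= INR (S m) * zflat z J (S m).
Proof. apply Rmult_le_pos; [apply pos_INR|apply zflat_nonneg]. Qed.

Lemma wnum_S b : wnum z J A (S b) = wnum z J A b + INR (S b) * zflat z J (S b).
Proof. unfold wnum. rewrite psum_S. lra. Qed.

Lemma wnum_ge_A b : A <= wnum z J A b.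
Proof.
  unfold wnum. pose proof (psum_nonneg _ b (fun m _ => wnum_term_nonneg m)). lra.
Qed.

Lemma wnum_mono a b : (a <= b)%nat -> wnum z J A a <= wnum z J A b.
Proof.
  intros H. unfold wnum. apply Rplus_le_compat_l, psum_mono; auto. apply wnum_term_nonneg.
Qed.

Lemma wnum_ge_zflat c b :
  (c <= b)%nat -> zflat z J c * (INR c * INR (S c) / 2) <= wnum z J A b - A.
Proof.
  intros Hcb. unfold wnum. rewrite <- psum_INR_S, <- psum_scal.
  replace (A + _ - A) with (psum (fun m => INR (S m) * zflat z J (S m)) b) by lra.
  apply Rle_trans with (psum (fun m => INR (S m) * zflat z J (S m)) c).
  - apply psum_le. intros j Hj.
    assert (zflat z J c <= zflat z J (S j)) by (apply zflat_le; lia).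
    pose proof (pos_INR (S j)). nra.
  - apply psum_mono; auto. apply wnum_term_nonneg.
Qed.

Lemma weight_pos b : (1 <= b)%nat -> 0 < weight z J A b.
Proof.
  intros Hb. unfold weight. assert (1 <= INR b) by (apply (le_INR 1); auto).
  rewrite S_INR. pose proof (wnum_ge_A b). apply Rdiv_lt_0_compat; nra.
Qed.

Lemma weight_mul b : (1 <= b)%nat -> weight z J A b * (INR b * INR (S b)) = wnum z J A b.
Proof.
  intros Hb. unfold weight. assert (1 <= INR b) by (apply (le_INR 1); auto).
  rewrite S_INR. field. lra.
Qed.

Lemma weight_S_le b : (1 <= b)%nat -> weight z J A (S b) <= weight z J A b.
Proof.
  intros Hb. assert (1 <= INR b) by (apply (le_INR 1); auto).
  assert (H1 := wnum_ge_zflat b b (le_n b)).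
  assert (H2 : zflat z J (S b) <= zflat z J b) by (apply zflat_le; lia).
  assert (H3 := zflat_nonneg (S b)).
  unfold weight. rewrite wnum_S, !S_INR in *.
  set (nb := wnum z J A b) in *. set (zb := zflat z J b) in *.
  set (z1 := zflat z J (S b)) in *. set (x := INR b) in *.
  apply Rmult_le_reg_r with ((x + 1) * (x + 1 + 1) * x); [nra|]. unfold Rdiv.
  replace ((nb + (x + 1) * z1) * / ((x + 1) * (x + 1 + 1)) * ((x + 1) * (x + 1 + 1) * x))
    with ((nb + (x + 1) * z1) * x) by (field; nra).
  replace (nb * / (x * (x + 1)) * ((x + 1) * (x + 1 + 1) * x)) with (nb * (x + 1 + 1))
    by (field; nra).
  nra.
Qed.

Lemma psum_weight_eq K :
  psum (fun m => weight z J A (S m)) K + wnum z J A K / INR (S K) =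
  A + psum (fun m => zflat z J (S m)) K.
Proof.
  induction K as [|K IH]; [unfold wnum; simpl; lra|].
  rewrite !psum_S, <- Rplus_assoc, <- IH. unfold weight. rewrite wnum_S.
  pose proof (pos_INR K). rewrite !S_INR. field. lra.
Qed.

Lemma psum_weight_le K :
  psum (fun m => weight z J A (S m)) K <= A + psum (fun m => zflat z J (S m)) K.
Proof.
  rewrite <- psum_weight_eq. pose proof (wnum_ge_A K).
  assert (0 < INR (S K)) by (apply lt_0_INR; lia).
  assert (0 <= wnum z J A K / INR (S K)) by (apply Rmult_le_pos; [lra|apply Rlt_le, Rinv_0_lt_compat; lra]). lra.
Qed.

Lemma weight_le_ratio a b r :
  (1 <= a)%nat -> (a <= b)%nat -> INR b * INR (S b) <= r * (INR a * INR (S a)) ->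
  weight z J A a <= r * weight z J A b.
Proof.
  intros Ha Hab H.
  pose proof (weight_mul a Ha) as e1. pose proof (weight_mul b ltac:(lia)) as e2.
  pose proof (wnum_mono a b Hab). pose proof (weight_pos b ltac:(lia)).
  assert (1 <= INR a) by (apply (le_INR 1); auto). rewrite !S_INR in *.
  apply Rmult_le_reg_r with (INR a * (INR a + 1)); [nra|].
  apply (Rmult_le_compat_l (weight z J A b)) in H; [|lra]. rewrite e1. nra.
Qed.

Lemma zflat_le_weight c b r :
  (1 <= c)%nat -> (c <= b)%nat -> INR b * INR (S b) <= r * (INR c * INR (S c)) ->
  zflat z J c <= 2 * r * weight z J A b.
Proof.
  intros Hc Hcb H.
  pose proof (wnum_ge_zflat c b Hcb). pose proof (weight_mul b ltac:(lia)).
  pose proof (weight_pos b ltac:(lia)). pose proof (zflat_nonneg c).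
  assert (1 <= INR c) by (apply (le_INR 1); auto). rewrite !S_INR in *.
  apply Rmult_le_reg_r with (INR c * (INR c + 1)); [nra|]. nra.
Qed.
End Weight.
Lemma psum_indicator_le c J K :
  0 <= c -> psum (fun j => if (j <? J)%nat then c else 0) K <= INR J * c.
Proof.
  intros Hc. apply Rle_trans with (psum (fun j => if (j <? J)%nat then c else 0) (K + J)).
  - apply psum_mono; [|lia]. intros j; destruct (j <? J)%nat; lra.
  - rewrite <- (psum_truncate (fun _ => c)) by lia. rewrite psum_const. lra.
Qed.

Lemma sq_window_le a d l rho :
  0 < rho -> 0 <= d -> d <= l -> l + 1 <= a -> 3 * l <= rho * a ->
  (a + d) * (a + d + 1) <= (1 + rho) * (a * (a + 1)).
Proof.
  intros. assert (d * (2 * a + d + 1) <= 3 * l * a) by nra.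
  assert (3 * l * a <= rho * a * a) by nra. nra.
Qed.

Lemma sq_double_le a n b :
  1 <= n -> n <= 2 * a -> 0 <= b -> b <= 2 * n -> b * (b + 1) <= 16 * (a * (a + 1)).
Proof. intros. nra. Qed.

Lemma sq_quarter_le c n b :
  1 <= n -> n <= 8 * c -> n <= 4 * (c + 1) -> 0 <= b -> b <= 2 * n ->
  b * (b + 1) <= 192 * (c * (c + 1)).
Proof. intros. assert (n * n <= 32 * (c * (c + 1))) by nra. nra. Qed.

(* The condition on [s] that makes [1 + Sb - sum_{j < y - i} s j] superharmonic above [i]. *)
Definition lag_adapted (z : nat -> R) (eps : R) (L : nat) (s : nat -> R) : Prop :=
  forall k, psum (fun j => (s (k - S j)%nat - s (k + L)%nat) * z (S j)) k <= eps * s (k + L)%nat.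

Section LagAdapted.
Variable z : nat -> R.
Hypothesis zpos : forall j, 0 <= z j.
Hypothesis zdec : forall j, z (S j) <= z j.
Variables eps mu : R.
Hypothesis heps : 0 < eps.
Hypothesis hmu : forall K, psum (fun j => z (S j)) K <= mu.
Variable L : nat.

(* [4656 = 3 * (16 + 384 * 4)]: the medium and long downward jumps then together contribute
   at most [eps / 3] in [weight_lag_adapted]. *)
Let eta := eps / 4656.
Variable J0 : nat.
Hypothesis HJ0 : (1 <= J0)%nat.
Hypothesis htail : forall K, psum (fun m => if (J0 <=? m)%nat then z m else 0) K <= eta.
Let J := (2 * J0)%nat.
Let rho := eps / (3 * (mu + 1)).
Variable N1 : nat.
Hypothesis HN1 : INR J + INR (J + L) + 1 + 3 * INR (J + L) / rho < INR N1.
Let N := (N1 + 2 * J + L + 8)%nat.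
Let s k := weight z J eta (k + N).

Lemma eta_pos : 0 < eta.
Proof. unfold eta. lra. Qed.

Lemma mu_nonneg : 0 <= mu.
Proof. specialize (hmu 0%nat). simpl in hmu. lra. Qed.

Lemma rho_pos : 0 < rho.
Proof. pose proof mu_nonneg. unfold rho. apply Rdiv_lt_0_compat; lra. Qed.

Lemma psum_tail_S_small K : psum (fun j => if (J0 <=? S j)%nat then z (S j) else 0) K <= eta.
Proof.
  eapply Rle_trans; [|apply (htail (S K))]. rewrite psum_shift.
  assert (0 <= if (J0 <=? 0)%nat then z 0%nat else 0) by (destruct (J0 <=? 0)%nat; auto; lra).
  lra.
Qed.

Lemma psum_zflat_small K : psum (fun m => zflat z J (S m)) K <= 3 * eta.
Proof.
  assert (HzJ : INR J0 * z J <= eta).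
  { eapply Rle_trans; [|apply (htail (J0 + J0))]. rewrite psum_add, <- psum_const.
    assert (0 <= psum (fun m => if (J0 <=? m)%nat then z m else 0) J0)
      by (apply psum_nonneg; intros m _; destruct (J0 <=? m)%nat; auto; lra).
    enough (psum (fun _ => z J) J0 <=
            psum (fun j => if (J0 <=? J0 + j)%nat then z (J0 + j)%nat else 0) J0) by lra.
    apply psum_le. intros j Hj. destruct (Nat.leb_spec J0 (J0 + j)); [|lia].
    apply nonincreasing_le; auto. unfold J. lia. }
  apply Rle_trans with (psum (fun m => (if (m <? J)%nat then z J else 0) +
                                        (if (J0 <=? S m)%nat then z (S m) else 0)) K).
  - apply psum_le. intros m _. unfold zflat. destruct (Nat.ltb_spec m J).
    + replace (Nat.max (S m) J) with J by lia.
      destruct (J0 <=? S m)%nat; [specialize (zpos (S m))|]; lra.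
    + replace (Nat.max (S m) J) with (S m) by lia.
      destruct (Nat.leb_spec J0 (S m)); [lra|unfold J in *; lia].
  - rewrite psum_plus. pose proof (psum_indicator_le (z J) J K (zpos J)).
    pose proof (psum_tail_S_small K). unfold J in *. rewrite mult_INR in *. simpl (INR 2) in *.
    lra.
Qed.

Lemma s_pos m : 0 < s m.
Proof. apply weight_pos; auto. apply eta_pos. unfold N; lia. Qed.

Lemma s_S_le m : s (S m) <= s m.
Proof. unfold s. apply weight_S_le; auto. apply eta_pos. unfold N; lia. Qed.

Lemma psum_s_le K : psum s K <= 4 * eta.
Proof.
  unfold s.
  rewrite (psum_ext _ (fun k => weight z J eta (S (N - 1 + k)))) by (intros; f_equal; unfold N; lia).
  apply Rle_trans with (psum (fun m => weight z J eta (S m)) (N - 1 + K)).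
  - rewrite psum_add.
    assert (0 <= psum (fun m => weight z J eta (S m)) (N - 1)); [|lra].
    apply psum_nonneg. intros m _. apply Rlt_le, weight_pos; auto; [apply eta_pos|lia].
  - eapply Rle_trans; [apply psum_weight_le; auto; apply eta_pos|].
    pose proof (psum_zflat_small (N - 1 + K)). lra.
Qed.

Lemma s_ratio_window k j :
  (j < k)%nat -> (S j < J)%nat -> s (k - S j)%nat <= (1 + rho) * s (k + L)%nat.
Proof.
  intros Hj HJ. pose proof rho_pos. unfold s.
  set (a := (k - S j + N)%nat).
  assert (HNa : INR N1 <= INR a) by (apply le_INR; unfold a, N; lia).
  assert (Hpos : 0 <= 3 * INR (J + L) / rho)
    by (apply Rmult_le_pos; [pose proof (pos_INR (J + L)); lra|apply Rlt_le, Rinv_0_lt_compat; lra]).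
  pose proof (pos_INR J). pose proof (pos_INR (J + L)).
  apply weight_le_ratio; auto; try apply eta_pos; try (unfold a, N; lia).
  rewrite !S_INR.
  replace (INR (k + L + N)) with (INR a + INR (S j + L)) by (rewrite <- plus_INR; f_equal; unfold a; lia).
  apply sq_window_le with (INR (J + L)); auto.
  - apply pos_INR.
  - apply le_INR. lia.
  - lra.
  - assert (HH : 3 * INR (J + L) / rho <= INR a) by lra.
    apply (Rmult_le_compat_l rho) in HH; [|lra].
    replace (rho * (3 * INR (J + L) / rho)) with (3 * INR (J + L)) in HH by (field; lra). lra.
Qed.

Lemma s_ratio_double k j :
  (j < k)%nat -> (2 * S j <= k + N)%nat -> s (k - S j)%nat <= 16 * s (k + L)%nat.
Proof.
  intros Hj Hn. unfold s. apply weight_le_ratio; auto; try apply eta_pos; try (unfold N; lia).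
  rewrite !S_INR. apply sq_double_le with (INR (k + N)).
  - apply (le_INR 1). unfold N; lia.
  - replace 2 with (INR 2) by reflexivity. rewrite <- mult_INR. apply le_INR. lia.
  - apply pos_INR.
  - replace 2 with (INR 2) by reflexivity. rewrite <- mult_INR. apply le_INR. unfold N; lia.
Qed.

Lemma z_le_s_far k j :
  (J <= S j)%nat -> (k + N < 2 * S j)%nat -> z (S j) <= 384 * s (k + L)%nat.
Proof.
  intros HJ Hn. set (n := (k + N)%nat). set (c := (n / 4)%nat).
  assert (Hc1 : (4 * c <= n)%nat) by (apply Nat.Div0.mul_div_le; lia).
  assert (Hc2 : (n < 4 * (c + 1))%nat).
  { pose proof (Nat.div_mod n 4 ltac:(lia)). pose proof (Nat.mod_upper_bound n 4 ltac:(lia)).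
    unfold c; lia. }
  assert (Hzj : z (S j) <= zflat z J c).
  { replace (z (S j)) with (zflat z J (S j)) by (unfold zflat; f_equal; lia).
    apply zflat_le; auto. unfold n in *. lia. }
  eapply Rle_trans; [exact Hzj|]. replace 384 with (2 * 192) by lra.
  unfold s. apply zflat_le_weight; auto; try apply eta_pos; try (unfold n, N in *; lia).
  rewrite !S_INR. apply sq_quarter_le with (INR n).
  - apply (le_INR 1). unfold n, N; lia.
  - replace 8 with (INR 8) by (simpl; lra). rewrite <- mult_INR. apply le_INR. unfold n, N in *; lia.
  - replace 4 with (INR 4) by (simpl; lra). rewrite <- S_INR, <- mult_INR. apply le_INR. lia.
  - apply pos_INR.
  - replace 2 with (INR 2) by reflexivity. rewrite <- mult_INR. apply le_INR. unfold n, N; lia.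
Qed.

Lemma lag_term_le k j : (j < k)%nat ->
  (s (k - S j)%nat - s (k + L)%nat) * z (S j) <=
    (if (S j <? J)%nat then rho * s (k + L)%nat * z (S j) else 0) +
    (if (J0 <=? S j)%nat then 16 * s (k + L)%nat * z (S j) else 0) +
    384 * s (k + L)%nat * s (k - S j)%nat.
Proof.
  intros Hj. set (u := s (k + L)%nat).
  pose proof (s_pos (k - S j)). pose proof (s_pos (k + L)). pose proof (zpos (S j)).
  pose proof rho_pos.
  assert (0 <= 384 * u * s (k - S j)%nat) by (unfold u; nra).
  destruct (Nat.ltb_spec (S j) J) as [HJ|HJ].
  - pose proof (s_ratio_window k j Hj HJ).
    destruct (J0 <=? S j)%nat; unfold u in *; nra.
  - destruct (Nat.leb_spec J0 (S j)); [|unfold J in *; lia].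
    destruct (Nat.le_gt_cases (2 * S j) (k + N)) as [Hn|Hn].
    + pose proof (s_ratio_double k j Hj Hn). unfold u in *. nra.
    + pose proof (z_le_s_far k j HJ Hn). unfold u in *. nra.
Qed.

Lemma weight_lag_adapted : lag_adapted z eps L s.
Proof.
  intros k. pose proof rho_pos. pose proof eta_pos. pose proof mu_nonneg.
  eapply Rle_trans; [apply psum_le, lag_term_le|]. rewrite !psum_plus.
  set (u := s (k + L)%nat). assert (Hu : 0 < u) by apply s_pos.
  assert (T1 : psum (fun j => if (S j <? J)%nat then rho * u * z (S j) else 0) k <= rho * u * mu).
  { apply Rle_trans with (psum (fun j => rho * u * z (S j)) k).
    - apply psum_le. intros j _. pose proof (zpos (S j)).
      destruct (S j <? J)%nat; [lra|]. apply Rmult_le_pos; [nra|lra].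
    - rewrite !psum_scal. apply Rmult_le_compat_l; [nra|apply hmu]. }
  assert (T2 : psum (fun j => if (J0 <=? S j)%nat then 16 * u * z (S j) else 0) k <= 16 * u * eta).
  { apply Rle_trans with (16 * u * psum (fun j => if (J0 <=? S j)%nat then z (S j) else 0) k).
    - right. rewrite <- psum_scal. apply psum_ext. intros j _. destruct (J0 <=? S j)%nat; ring.
    - apply Rmult_le_compat_l; [lra|apply psum_tail_S_small]. }
  assert (T3 : psum (fun j => 384 * u * s (k - S j)%nat) k <= 384 * u * (4 * eta)).
  { rewrite psum_scal. apply Rmult_le_compat_l; [lra|].
    rewrite (psum_ext _ (fun j => s (k - 1 - j)%nat)) by (intros; f_equal; lia).
    rewrite psum_rev. apply psum_s_le. }
  assert (rho * mu <= eps / 3).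
  { unfold rho. apply Rmult_le_reg_r with (3 * (mu + 1)); [lra|].
    replace (eps / (3 * (mu + 1)) * mu * (3 * (mu + 1))) with (eps * mu) by (field; lra). nra. }
  assert (rho * u * mu <= eps / 3 * u) by nra.
  assert (0 < eps * u) by (apply Rmult_lt_0_compat; lra).
  assert (16 * u * eta + 384 * u * (4 * eta) = eps / 3 * u) by (unfold eta; field).
  lra.
Qed.
End LagAdapted.

Lemma exists_lag_adapted (z : nat -> R) eps mu L :
  (forall j, 0 <= z j) -> (forall j, z (S j) <= z j) -> 0 < eps ->
  (forall K, psum (fun j => z (S j)) K <= mu) ->
  exists (s : nat -> R) (Sb : R), (forall m, 0 < s m) /\ (forall m, s (S m) <= s m) /\
    (forall K, psum s K <= Sb) /\ lag_adapted z eps L s.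
Proof.
  intros zpos zdec heps hmu.
  assert (Heta : 0 < eps / 4656) by lra.
  destruct (exists_small_tail z mu (eps / 4656) zpos hmu Heta) as [J0 [HJ0 htail]].
  destruct (INR_unbounded (INR (2 * J0) + INR (2 * J0 + L) + 1 +
                           3 * INR (2 * J0 + L) / (eps / (3 * (mu + 1))))) as [N1 HN1].
  exists (fun k => weight z (2 * J0) (eps / 4656) (k + (N1 + 2 * (2 * J0) + L + 8))).
  exists (4 * (eps / 4656)). split; [|split; [|split]]; intros.
  - eapply s_pos; eauto.
  - eapply s_S_le; eauto.
  - eapply psum_s_le; eauto.
  - eapply weight_lag_adapted; eauto.
Qed.
Definition capped_drift (P : nat -> nat -> R) (M : R) (x y : nat) : R :=
  if Rle_dec (INR y - INR x) M then (INR y - INR x) * P x y else 0.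

Definition lyap (s : nat -> R) (Sb : R) (i y : nat) : R := 1 + Sb - psum s (y - i).

Definition excess (s : nat -> R) (k L j : nat) : R :=
  if (j <=? k)%nat then s (k - j)%nat - s (k + L)%nat else 0.

Section Lyapunov.
Variable P : nat -> nat -> R.
Hypothesis Ppos : forall x y, 0 <= P x y.
Hypothesis Psum : forall x, infinite_sum (P x) 1.
Variables eps M : R.
Hypothesis HM : 0 < M.
Variable L : nat.
Hypothesis HL : M <= INR L.
Variable z : nat -> R.
Hypothesis hjump : forall x j,
  sum_f_R0 (fun k => if (k + j <=? x)%nat then P x k else 0) x <= z j.
Hypothesis hdrift : forall x, exists sx, infinite_sum (capped_drift P M x) sx /\ eps <= sx.
Variable s : nat -> R.
Hypothesis spos : forall m, 0 < s m.
Hypothesis sdec : forall m, s (S m) <= s m.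
Variable Sb : R.
Hypothesis ssum : forall K, psum s K <= Sb.
Hypothesis hlag : lag_adapted z eps L s.
Variable i : nat.

Lemma s_le a b : (a <= b)%nat -> s b <= s a.
Proof. apply nonincreasing_le; auto. Qed.

Lemma psum_s_nonneg n : 0 <= psum s n.
Proof. apply psum_nonneg. intros; apply Rlt_le, spos. Qed.

Lemma lyap_bounds y : 1 <= lyap s Sb i y <= 1 + Sb.
Proof. unfold lyap. pose proof (ssum (y - i)). pose proof (psum_s_nonneg (y - i)). lra. Qed.

Lemma P_lyap_nonneg x y : 0 <= P x y * lyap s Sb i y.
Proof. pose proof (lyap_bounds y). pose proof (Ppos x y). nra. Qed.

Lemma lyap_step_below x B :
  (x <= i)%nat -> sum_f_R0 (fun y => P x y * lyap s Sb i y) B <= lyap s Sb i x.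
Proof.
  intros Hx. unfold lyap at 2. replace (x - i)%nat with 0%nat by lia. simpl psum.
  apply Rle_trans with (sum_f_R0 (fun y => (1 + Sb) * P x y) B).
  - apply sum_Rle. intros y _. pose proof (lyap_bounds y). pose proof (Ppos x y). nra.
  - rewrite sum_f_R0_psum, psum_scal, <- sum_f_R0_psum.
    pose proof (sum_incr (P x) B 1 (Psum x) (Ppos x)). pose proof (ssum 0). simpl in *. nra.
Qed.

Lemma lyap_step_at B :
  sum_f_R0 (fun y => P i y * lyap s Sb i y) B <= 1 + Sb - s L * eps / M.
Proof.
  destruct (hdrift i) as [si [Hsi Hei]].
  set (c := s L / M).
  assert (Hc : 0 < c) by (apply Rdiv_lt_0_compat; auto).
  assert (HG := infinite_sum_comb (P i) (capped_drift P M i) (1 + Sb) c 1 si (Psum i) Hsi).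
  enough (sum_f_R0 (fun y => P i y * lyap s Sb i y) B <= (1 + Sb) * 1 - c * si + 0).
  { assert (c * eps <= c * si) by nra. unfold c in *. unfold Rdiv in *. nra. }
  refine (sum_f_R0_le_limit _ _ _ 0 B (P_lyap_nonneg i) _ HG). intros B'. rewrite Rplus_0_r. apply sum_Rle. intros y _.
  pose proof (Ppos i y). pose proof (spos L).
  assert (Hs0 : s L <= s 0) by (apply s_le; lia).
  unfold lyap, capped_drift. destruct (Nat.le_gt_cases y i) as [Hy|Hy].
  - replace (y - i)%nat with 0%nat by lia. simpl psum.
    assert (INR y <= INR i) by (apply le_INR; auto).
    destruct (Rle_dec (INR y - INR i) M); [|lra].
    assert ((INR y - INR i) * P i y <= 0) by nra. nra.
  - assert (Hd : s 0 <= psum s (y - i)).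
    { destruct (y - i)%nat as [|d] eqn:E; [lia|]. rewrite psum_shift.
      pose proof (psum_nonneg (fun j => s (S j)) d (fun j _ => Rlt_le _ _ (spos (S j)))). lra. }
    destruct (Rle_dec (INR y - INR i) M) as [Hle|Hgt].
    + assert (c * ((INR y - INR i) * P i y) <= s L * P i y).
      { assert ((INR y - INR i) / M <= 1).
        { apply Rmult_le_reg_r with M; auto. unfold Rdiv. rewrite Rmult_assoc, Rinv_l; lra. }
        replace (c * ((INR y - INR i) * P i y)) with (s L * P i y * ((INR y - INR i) / M))
          by (unfold c; field; lra).
        assert (0 <= s L * P i y) by nra. nra. }
      nra.
    + pose proof (psum_s_nonneg (y - i)). nra.
Qed.

Lemma excess_nonneg k j : 0 <= excess s k L j.
Proof.
  unfold excess. destruct (j <=? k)%nat; [|lra].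
  assert (s (k + L)%nat <= s (k - j)%nat) by (apply s_le; lia). lra.
Qed.

(* A downward jump by [d] from level [k] costs at most the linear price [s (k + L)] per step
   plus the excess of the traversed terms over that price. *)
Lemma psum_s_drop k d :
  psum s k - psum s (k - d) <= s (k + L)%nat * INR d + psum (fun j => excess s k L (S j)) d.
Proof.
  induction d as [|d IH]; [replace (k - 0)%nat with k by lia; simpl; lra|].
  rewrite psum_S, S_INR. destruct (Nat.lt_ge_cases d k).
  - replace (k - d)%nat with (S (k - S d)) in IH by lia. rewrite psum_S in IH.
    unfold excess at 2. destruct (Nat.leb_spec (S d) k); [|lia]. lra.
  - replace (k - S d)%nat with (k - d)%nat by lia.
    pose proof (excess_nonneg k (S d)). pose proof (spos (k + L)). lra.
Qed.

Lemma excess_jump_le x k : (k <= x)%nat ->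
  psum (fun y => P x y * psum (fun j => excess s k L (S j)) (x - y)) x <= eps * s (k + L)%nat.
Proof.
  intros Hk.
  rewrite (psum_ext _ (fun y => psum (fun j => if (j <? x - y)%nat
                                               then P x y * excess s k L (S j) else 0) x)).
  2: { intros y Hy. rewrite (psum_truncate _ (x - y) x), <- psum_scal by lia.
       apply psum_ext. intros j _. destruct (j <? x - y)%nat; ring. }
  rewrite psum_swap.
  apply Rle_trans with (psum (fun j => excess s k L (S j) * z (S j)) x).
  { apply psum_le. intros j Hj.
    rewrite (psum_ext _ (fun y => excess s k L (S j) * (if (y + S j <=? x)%nat then P x y else 0)))
      by (intros y _; destruct (Nat.ltb_spec j (x - y)); destruct (Nat.leb_spec (y + S j) x);
          try lia; ring).
    rewrite psum_scal. apply Rmult_le_compat_l; [apply excess_nonneg|].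
    eapply Rle_trans; [|apply hjump]. rewrite sum_f_R0_psum. apply psum_mono; [|lia].
    intros y; destruct (y + S j <=? x)%nat; auto; lra. }
  replace x with (k + (x - k))%nat by lia. rewrite psum_add.
  rewrite (psum_ext (fun j => excess s k L (S (k + j)) * z (S (k + j)%nat)) (fun _ => 0))
    by (intros j _; unfold excess; destruct (Nat.leb_spec (S (k + j)) k); [lia|ring]).
  rewrite psum_const, Rmult_0_r, Rplus_0_r.
  eapply Rle_trans; [|apply hlag]. right. apply psum_ext. intros j Hj. unfold excess.
  destruct (Nat.leb_spec (S j) k); [reflexivity|lia].
Qed.

Lemma lyap_term_le x y : (i < x)%nat ->
  P x y * lyap s Sb i y <=
    lyap s Sb i x * P x y - s (x - i + L)%nat * capped_drift P M x y +
    (if (y <? x)%nat then P x y * psum (fun j => excess s (x - i) L (S j)) (x - y) else 0).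
Proof.
  intros Hix. set (k := (x - i)%nat). set (u := s (k + L)%nat).
  pose proof (Ppos x y). pose proof (spos (k + L)).
  unfold capped_drift, lyap. fold k. destruct (Nat.ltb_spec y x).
  - replace (y - i)%nat with (k - (x - y))%nat by (unfold k; lia).
    pose proof (psum_s_drop k (x - y)) as Hdrop. rewrite minus_INR in Hdrop by lia.
    destruct (Rle_dec (INR y - INR x) M).
    + fold u in Hdrop. nra.
    + exfalso. assert (INR y <= INR x) by (apply le_INR; lia). lra.
  - replace (y - i)%nat with (k + (y - x))%nat by (unfold k; lia). rewrite psum_add.
    destruct (Rle_dec (INR y - INR x) M).
    + assert (Hd : (y - x <= L)%nat) by (apply INR_le; rewrite minus_INR by lia; lra).
      assert (HH : INR (y - x) * u <= psum (fun j => s (k + j)%nat) (y - x)).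
      { rewrite <- psum_const. apply psum_le. intros j Hj. apply s_le. lia. }
      rewrite minus_INR in HH by lia. nra.
    + pose proof (psum_nonneg (fun j => s (k + j)%nat) (y - x) (fun j _ => Rlt_le _ _ (spos _))).
      nra.
Qed.

Lemma lyap_step_above x B :
  (i < x)%nat -> sum_f_R0 (fun y => P x y * lyap s Sb i y) B <= lyap s Sb i x.
Proof.
  intros Hix. set (k := (x - i)%nat). set (u := s (k + L)%nat).
  set (h := fun y => P x y * psum (fun j => excess s k L (S j)) (x - y)).
  assert (Hh : forall y, 0 <= h y).
  { intros y. apply Rmult_le_pos; auto. apply psum_nonneg. intros; apply excess_nonneg. }
  destruct (hdrift x) as [sx [Hsx Hex]].
  assert (HG := infinite_sum_comb (P x) (capped_drift P M x) (lyap s Sb i x) u 1 sx (Psum x) Hsx).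
  enough (sum_f_R0 (fun y => P x y * lyap s Sb i y) B <= lyap s Sb i x * 1 - u * sx + psum h x).
  { pose proof (excess_jump_le x k ltac:(unfold k; lia)). assert (0 < u) by apply spos.
    fold u h in H0. nra. }
  refine (sum_f_R0_le_limit _ _ _ _ B (P_lyap_nonneg x) _ HG). intros B'.
  rewrite !sum_f_R0_psum, (psum_truncate h x (S B' + x)) by lia.
  apply Rle_trans with (psum (fun y => lyap s Sb i x * P x y - u * capped_drift P M x y) (S B') +
                        psum (fun y => if (y <? x)%nat then h y else 0) (S B')).
  - rewrite <- psum_plus. apply psum_le. intros y _. apply lyap_term_le; auto.
  - apply Rplus_le_compat_l, psum_mono; [|lia]. intros y. destruct (y <? x)%nat; auto; lra.
Qed.

Lemma lyap_exp_step gamma x B :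
  exp gamma * (1 + Sb - s L * eps / M) <= 1 + Sb ->
  exp (gamma * indic (Nat.eqb x i)) * sum_f_R0 (fun y => P x y * lyap s Sb i y) B
    <= lyap s Sb i x.
Proof.
  intros Hgamma. destruct (Nat.eqb_spec x i) as [->|Hne]; simpl indic.
  - rewrite Rmult_1_r. eapply Rle_trans; [|eapply Rle_trans; [exact Hgamma|]].
    + apply Rmult_le_compat_l; [apply Rlt_le, exp_pos|apply lyap_step_at].
    + unfold lyap. rewrite Nat.sub_diag. simpl. lra.
  - rewrite Rmult_0_r, exp_0, Rmult_1_l. destruct (Nat.lt_ge_cases i x).
    + apply lyap_step_above; auto.
    + apply lyap_step_below; auto.
Qed.
End Lyapunov.
Lemma trunc_exp_le_superharmonic (P : nat -> nat -> R) gamma i B (f : nat -> R) :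
  (forall x y, 0 <= P x y) ->
  (forall x, exp (gamma * indic (Nat.eqb x i)) <= f x) ->
  (forall x, exp (gamma * indic (Nat.eqb x i)) * sum_f_R0 (fun y => P x y * f y) B <= f x) ->
  forall n x, trunc_exp P gamma i B n x <= f x.
Proof.
  intros Ppos Hbase Hstep n. induction n as [|n IH]; intros x; simpl trunc_exp; auto.
  eapply Rle_trans; [|apply (Hstep x)]. apply Rmult_le_compat_l; [apply Rlt_le, exp_pos|].
  apply sum_Rle. intros y _. apply Rmult_le_compat_l; auto.
Qed.

Lemma drift_scale_bounds P M eps x :
  (forall y, 0 <= P x y) -> infinite_sum (P x) 1 -> 0 < eps ->
  (exists sx, infinite_sum (capped_drift P M x) sx /\ eps <= sx) -> 0 < M /\ eps <= M.
Proof.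
  intros Ppos Psum heps [sx [Hsx Hex]].
  assert (sx <= Rmax M 0 * 1 - 0 * 1).
  { refine (Rle_cv_lim _ Hsx (infinite_sum_comb (P x) (P x) (Rmax M 0) 0 1 1 Psum Psum)).
    intros n. apply sum_Rle. intros j _. unfold capped_drift. pose proof (Ppos j).
    pose proof (Rmax_l M 0). pose proof (Rmax_r M 0).
    destruct (Rle_dec (INR j - INR x) M); nra. }
  unfold Rmax in *. destruct (Rle_dec M 0); lra.
Qed.

Lemma exists_exp_gap c delta :
  0 < delta -> delta <= c - 1 -> exists gamma, 0 < gamma /\ exp gamma * (c - delta) <= c /\ exp gamma <= c.
Proof.
  intros Hd Hc. exists (ln (c / (c - delta))).
  assert (Hexp : exp (ln (c / (c - delta))) = c / (c - delta)) by (apply exp_ln, Rdiv_lt_0_compat; lra).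
  rewrite Hexp. split; [|split].
  - rewrite <- ln_1. apply ln_increasing; [lra|]. apply Rmult_lt_reg_r with (c - delta); [lra|].
    unfold Rdiv. rewrite Rmult_assoc, Rinv_l; lra.
  - right. field. lra.
  - apply Rmult_le_reg_r with (c - delta); [lra|]. unfold Rdiv. rewrite Rmult_assoc, Rinv_l; nra.
Qed.

Theorem proposition6
  (P : nat -> nat -> R) (Pstoch : stochastic P)
  (eps M : R) (heps : 0 < eps)
  (hdrift : forall i : nat, exists s : R,
      infinite_sum
        (fun j => if Rle_dec (INR j - INR i) M then (INR j - INR i) * P i j else 0) s
      /\ eps <= s)
  (pz : nat -> R) (hpz : pmf pz)
  (hmean : exists m : R, infinite_sum (fun k => INR k * pz k) m)
  (hjump : forall i j : nat, exists t : R,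
      infinite_sum (fun k => pz (k + j)%nat) t /\
      sum_f_R0 (fun k => if Nat.leb (k + j) i then P i k else 0) i <= t) :
  exists gamma : R, 0 < gamma /\
    exists C : R, forall i : nat, exp_loc_le P gamma i C.
Proof.
  assert (Ppos : forall x y, 0 <= P x y) by (intros x y; apply (proj1 (Pstoch x))).
  assert (Psum : forall x, infinite_sum (P x) 1) by (intros x; apply (proj2 (Pstoch x))).
  destruct (drift_scale_bounds P M eps 0 (Ppos 0%nat) (Psum 0%nat) heps (hdrift 0%nat)) as [HM HeM].
  destruct (INR_unbounded M) as [L HL]. apply Rgt_lt, Rlt_le in HL.
  destruct hmean as [m hm].
  assert (hq : forall x j,
             sum_f_R0 (fun k => if (k + j <=? x)%nat then P x k else 0) x <= tail pz j).
  { intros x j. destruct (hjump x j) as [t [Ht1 Ht2]].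
    rewrite (uniqueness_sum _ _ _ Ht1 (tail_series pz hpz j)) in Ht2. exact Ht2. }
  destruct (exists_lag_adapted (tail pz) eps m L (tail_nonneg pz hpz) (tail_S_le pz hpz) heps
              (psum_tail_S_le_mean pz hpz m hm)) as [s [Sb [spos [sdec [ssum hlag]]]]].
  destruct (exists_exp_gap (1 + Sb) (s L * eps / M)) as [gamma [Hgamma [Hstep Hbase]]].
  { apply Rdiv_lt_0_compat; [apply Rmult_lt_0_compat|]; auto. }
  { pose proof (ssum (S L)). pose proof (psum_s_nonneg s spos L). pose proof (spos L). simpl in *.
    apply Rmult_le_reg_r with M; [lra|]. unfold Rdiv. rewrite Rmult_assoc, Rinv_l; nra. }
  exists gamma. split; [exact Hgamma|]. exists (1 + Sb). intros i n B.
  replace (1 + Sb) with (lyap s Sb i i) by (unfold lyap; rewrite Nat.sub_diag; simpl; lra).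
  apply (trunc_exp_le_superharmonic P gamma i B); auto.
  - intros x. destruct (Nat.eqb_spec x i) as [->|Hne]; simpl indic.
    + rewrite Rmult_1_r. unfold lyap. rewrite Nat.sub_diag. simpl. lra.
    + rewrite Rmult_0_r, exp_0. apply (lyap_bounds s spos Sb ssum).
  - intros x. apply lyap_exp_step with (eps := eps) (M := M) (L := L) (z := tail pz); auto.
Qed.
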